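(* Let $\mathcal N$ be a finite $k$-bounded Petri net ($k\ge1$) and $(\mathcal N^U,\lambda)$ an initial branching process of $\mathcal N$. Then every cut of $\mathcal N^U$ is finite.
   Context: A Petri net $(\mathcal P,\mathcal T,\mathcal F,\mathit{In})$ has disjoint places $\mathcal P$ and transitions $\mathcal T$, a flow relation $\mathcal F$ that is a multiset over $(\mathcal P\times\mathcal T)\cup(\mathcal T\times\mathcal P)$, and a finite multiset $\mathit{In}$ over $\mathcal P$; ${}^\bullet x(y)=\mathcal F(y,x)$, $x^\bullet(y)=\mathcal F(x,y)$, and every transition has finite nonempty pre- and postcondition. A marking is a finite multiset of places; $t$ is enabled in $M$ if ${}^\bullet t\subseteq M$, firing gives $M-{}^\bullet t+t^\bullet$; reachable markings are those obtained from $\mathit{In}$ by finitely many firings. The net is finite if it has finitely many places and transitions, and $k$-bounded if $M(p)\le k$ for every reachable marking $M$ and place $p$. For a map $f$ and a multiset $M$, $f[M](y)=\sum_{x:f(x)=y}M(x)$. Let $<$ be the transitive closure of $\{(x,y)\mid\mathcal F(x,y)>0\}$ and $\le$ its reflexive-transitive closure; nodes $x,y$ are in conflict if there is a place $p\ne x,y$ and distinct transitions $t_1,t_2\in p^\bullet$ with $t_1\le x$, $t_2\le y$; concurrent if neither causally related nor in conflict. An occurrence net is a Petri net in which pre- and postconditions of transitions are sets, every place has at most one incoming transition, $\mathit{In}=\{p\mid{}^\bullet p=\emptyset\}$, $\mathcal F^{-1}$ is well-founded, and no transition is in conflict with itself. A cut is a maximal set of pairwise concurrent places. A homomorphism from $\mathcal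 N_1$ to $\mathcal N_2$ is a map $\lambda$ sending places to places and transitions to transitions with $\lambda[{}^\bullet t]={}^\bullet\lambda(t)$ and $\lambda[t^\bullet]=\lambda(t)^\bullet$; it is initial if $\lambda[\mathit{In}_1]=\mathit{In}_2$. An initial branching process of $\mathcal N$ is a pair $(\mathcal N^U,\lambda)$ with $\mathcal N^U$ an occurrence net and $\lambda$ an initial homomorphism $\mathcal N^U\to\mathcal N$ such that ${}^\bullet t_1={}^\bullet t_2$ and $\lambda(t_1)=\lambda(t_2)$ imply $t_1=t_2$. *)

From Stdlib Require Import List Arith Relations.
Import ListNotations.


(** Raw data of a Petri net: places and transitions are two (hence disjoint)
    types; the flow relation is a multiset over (P x T) u (T x P), split into
    [pre p t = F(p,t)] and [post t p = F(t,p)]; [init] is the multiset In. *)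
Record PNet := {
  place : Type;
  trans : Type;
  pre   : place -> trans -> nat;
  post  : trans -> place -> nat;
  init  : place -> nat
}.

Definition finite_mset {X : Type} (M : X -> nat) : Prop :=
  exists l : list X, forall x, 0 < M x -> In x l.

Definition petri_net (N : PNet) : Prop :=
  finite_mset (init N) /\
  (forall t, finite_mset (fun p => pre N p t) /\ exists p, 0 < pre N p t) /\
  (forall t, finite_mset (fun p => post N t p) /\ exists p, 0 < post N t p).

Definition node (N : PNet) : Type := (place N + trans N)%type.

Definition flow (N : PNet) (x y : node N) : nat :=
  match x, y with
  | inl p, inr t => pre N p t
  | inr t, inl p => post N t p
  | _, _ => 0
  end.

Definition flowR (N : PNet) (x y : node N) : Prop := 0 < flow N x y.

Definition lt_node (N : PNet) : relation (node N) := clos_trans _ (flowR N).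
Definition le_node (N : PNet) : relation (node N) := clos_refl_trans _ (flowR N).

Definition conflict (N : PNet) (x y : node N) : Prop :=
  exists (p : place N) (t1 t2 : trans N),
    inl p <> x /\ inl p <> y /\ t1 <> t2 /\
    0 < pre N p t1 /\ 0 < pre N p t2 /\
    le_node N (inr t1) x /\ le_node N (inr t2) y.

Definition causally_related (N : PNet) (x y : node N) : Prop :=
  le_node N x y \/ le_node N y x.

Definition concurrent (N : PNet) (x y : node N) : Prop :=
  ~ causally_related N x y /\ ~ conflict N x y.

Definition enabled (N : PNet) (t : trans N) (M : place N -> nat) : Prop :=
  forall p, pre N p t <= M p.

Definition fire (N : PNet) (t : trans N) (M : place N -> nat) : place N -> nat :=
  fun p => M p - pre N p t + post N t p.

Inductive reachable (N : PNet) : (place N -> nat) -> Prop :=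
| reach_init : reachable N (init N)
| reach_fire : forall M t, reachable N M -> enabled N t M -> reachable N (fire N t M).

Definition finite_net (N : PNet) : Prop :=
  (exists lp : list (place N), forall p, In p lp) /\
  (exists lt : list (trans N), forall t, In t lt).

Definition k_bounded (k : nat) (N : PNet) : Prop :=
  forall M, reachable N M -> forall p, M p <= k.

Definition occurrence_net (N : PNet) : Prop :=
  (forall p t, pre N p t <= 1) /\
  (forall t p, post N t p <= 1) /\
  (forall p t1 t2, 0 < post N t1 p -> 0 < post N t2 p -> t1 = t2) /\
  (forall p, init N p <= 1 /\ (init N p = 1 <-> forall t, post N t p = 0)) /\
  well_founded (flowR N) /\
  (forall t : trans N, ~ conflict N (inr t) (inr t)).

Definition pairwise_concurrent (N : PNet) (C : place N -> Prop) : Prop :=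
  forall p q, C p -> C q -> p <> q -> concurrent N (inl p) (inl q).

Definition cut (N : PNet) (C : place N -> Prop) : Prop :=
  pairwise_concurrent N C /\
  forall D : place N -> Prop,
    (forall p, C p -> D p) -> pairwise_concurrent N D -> forall p, D p -> C p.

Definition finite_set {X : Type} (C : X -> Prop) : Prop :=
  exists l : list X, forall x, C x -> In x l.

Definition mset_sum_on {X : Type} (Q : X -> Prop) (M : X -> nat) (n : nat) : Prop :=
  exists l : list X, NoDup l /\ (forall x, In x l -> Q x) /\
    (forall x, Q x -> 0 < M x -> In x l) /\ n = list_sum (map M l).

Definition mset_image {X Y : Type} (f : X -> Y) (M : X -> nat) (N : Y -> nat) : Prop :=
  forall y, mset_sum_on (fun x => f x = y) M (N y).

Definition homomorphism (N1 N2 : PNet)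
  (lp : place N1 -> place N2) (lt : trans N1 -> trans N2) : Prop :=
  forall t, mset_image lp (fun p => pre N1 p t) (fun q => pre N2 q (lt t)) /\
            mset_image lp (fun p => post N1 t p) (fun q => post N2 (lt t) q).

Definition initial_homomorphism (N1 N2 : PNet)
  (lp : place N1 -> place N2) (lt : trans N1 -> trans N2) : Prop :=
  homomorphism N1 N2 lp lt /\ mset_image lp (init N1) (init N2).

Definition initial_branching_process (N NU : PNet)
  (lp : place NU -> place N) (lt : trans NU -> trans N) : Prop :=
  petri_net NU /\ occurrence_net NU /\ initial_homomorphism NU N lp lt /\
  (forall t1 t2, (forall p, pre NU p t1 = pre NU p t2) -> lt t1 = lt t2 -> t1 = t2).

From Stdlib Require Import List Arith Relations Lia Classical ClassicalEpsilon Wellfounded.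
Import ListNotations.

(* Let X be a finite set of pairwise concurrent conditions of the unfolding. Its past is
   finite, and if it is nonempty it has a maximal transition t, whose postset meets X.
   Replacing the postset of t by its preset yields a pairwise concurrent set with a
   strictly smaller past; firing lambda(t) from a marking dominating its image gives a
   marking dominating lambda[X]. By induction lambda[X] is dominated by a reachable
   marking of N, so at most k conditions of a cut lie over any place of N, and N has
   finitely many places. *)

Lemma finite_set_incl {X} (F G : X -> Prop) :
  finite_set F -> (forall x, G x -> F x) -> finite_set G.
Proof. intros [l Hl] HGF. exists l. auto. Qed.

Lemma finite_set_list_union {A B} (l : list A) (F : A -> B -> Prop) :
  (forall a, In a l -> finite_set (F a)) -> finite_set (fun b => exists a, In a l /\ F a b).
Proof.
  induction l as [|a l IH]; intros Hfin.
  - exists []. intros b [a [[] _]].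
  - destruct (Hfin a (or_introl eq_refl)) as [la Hla].
    destruct IH as [lr Hlr]; [intros; apply Hfin; now right|].
    exists (la ++ lr). intros b [a' [[<- | Ha'] Hb]]; apply in_or_app; eauto.
Qed.

Lemma finite_set_of_bounded_NoDup {X} (Q : X -> Prop) k :
  (forall L, NoDup L -> (forall x, In x L -> Q x) -> length L <= k) -> finite_set Q.
Proof.
  intros Hbound.
  enough (Hext : forall m L, k - length L = m -> NoDup L -> (forall x, In x L -> Q x) ->
                 finite_set Q)
    by (apply (Hext _ [] eq_refl); [constructor | intros _ []]).
  induction m as [m IH] using lt_wf_ind; intros L <- HL HLQ.
  destruct (classic (forall x, Q x -> In x L)) as [Hall | Hnot]; [now exists L|].
  apply not_all_ex_not in Hnot as [x Hx]. apply imply_to_and in Hx as [Qx HxL].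
  assert (HxLnd : NoDup (x :: L)) by now constructor.
  assert (HxLQ : forall y, In y (x :: L) -> Q y) by (intros y [<- | Hy]; auto).
  pose proof (Hbound _ HxLnd HxLQ) as Hlen; simpl in Hlen.
  apply (IH (k - length (x :: L))) with (x :: L); auto. simpl; lia.
Qed.

Lemma length_filter_split {X} (f : X -> bool) l :
  length l = length (filter f l) + length (filter (fun x => negb (f x)) l).
Proof. induction l as [|a l IH]; simpl; auto. destruct (f a); simpl; lia. Qed.

Lemma length_filter_pos_le_sum {X} (M : X -> nat) l :
  length (filter (fun x => 0 <? M x) l) <= list_sum (map M l).
Proof.
  induction l as [|a l IH]; simpl; auto.
  destruct (0 <? M a) eqn:Ha; simpl; [apply Nat.ltb_lt in Ha|]; lia.
Qed.

Lemma length_filter_pos_eq_sum {X} (M : X -> nat) l :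
  (forall x, In x l -> M x <= 1) -> length (filter (fun x => 0 <? M x) l) = list_sum (map M l).
Proof.
  induction l as [|a l IH]; simpl; intros H01; auto.
  specialize (IH (fun x Hx => H01 x (or_intror Hx))).
  pose proof (H01 a (or_introl eq_refl)).
  destruct (0 <? M a) eqn:Ha; simpl; [apply Nat.ltb_lt in Ha | apply Nat.ltb_ge in Ha]; lia.
Qed.

Lemma mset_sum_on_ge_length {X} (Q : X -> Prop) (M : X -> nat) n Y :
  mset_sum_on Q M n -> NoDup Y -> (forall y, In y Y -> Q y /\ 0 < M y) -> length Y <= n.
Proof.
  intros [l [_ [_ [Hcov ->]]]] HY HYQ.
  eapply Nat.le_trans; [|apply length_filter_pos_le_sum].
  apply NoDup_incl_length; auto.
  intros y Hy. destruct (HYQ y Hy). apply filter_In. split; auto. now apply Nat.ltb_lt.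
Qed.

Lemma mset_sum_on_set_support {X} (Q : X -> Prop) (M : X -> nat) n :
  mset_sum_on Q M n -> (forall x, M x <= 1) ->
  exists Z, NoDup Z /\ length Z = n /\ forall z, In z Z -> Q z /\ 0 < M z.
Proof.
  intros [l [Hl [HlQ [_ ->]]]] H01.
  exists (filter (fun x => 0 <? M x) l). split; [now apply NoDup_filter|split].
  - apply length_filter_pos_eq_sum. auto.
  - intros z Hz. apply filter_In in Hz as [Hzl Hz]. split; auto. now apply Nat.ltb_lt.
Qed.

Lemma exists_maximal_in_list {A} (R : A -> A -> Prop) (P : A -> Prop) :
  (forall x y z, R x y -> R y z -> R x z) -> (forall x, ~ R x x) ->
  forall l, (exists a, In a l /\ P a) -> exists m, In m l /\ P m /\ forall y, In y l -> P y -> ~ R m y.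
Proof.
  intros Htrans Hirr.
  induction l as [|a l IH]; intros [a0 [Ha0 Pa0]]; [destruct Ha0|].
  destruct (classic (exists b, In b l /\ P b)) as [Hb | Hb].
  - destruct (IH Hb) as [m [Hm [Pm Hmax]]].
    destruct (classic (P a /\ R m a)) as [[Pa Rma] | Hnot].
    + exists a. split; [now left|split; auto].
      intros y [<- | Hy] Py Ray; [exact (Hirr _ Ray)|].
      exact (Hmax y Hy Py (Htrans _ _ _ Rma Ray)).
    + exists m. split; [now right|split; auto].
      intros y [<- | Hy] Py Rmy; [apply Hnot; auto | exact (Hmax y Hy Py Rmy)].
  - assert (a0 = a) as ->.
    { destruct Ha0 as [-> | Ha0]; auto. exfalso; apply Hb; eauto. }
    exists a. split; [now left|split; auto].
    intros y [<- | Hy] Py Ray; [exact (Hirr _ Ray) | apply Hb; eauto].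
Qed.

Section Causality.

Variable N : PNet.

Lemma lt_node_irrefl : well_founded (flowR N) -> forall x, ~ lt_node N x x.
Proof.
  intros Hwf x. induction (wf_clos_trans _ _ Hwf x) as [x _ IH]. intros Hxx. exact (IH x Hxx Hxx).
Qed.

Lemma le_node_flow_lt x y z : le_node N x y -> flowR N y z -> lt_node N x z.
Proof. intros Hxy Hyz. eapply clos_rt_t; [exact Hxy | now apply t_step]. Qed.

Lemma flow_le_node_lt x y z : flowR N x y -> le_node N y z -> lt_node N x z.
Proof.
  intros Hxy Hyz. apply clos_rt_rtn1 in Hyz. induction Hyz as [|z w Hzw _ IH].
  - now apply t_step.
  - eapply t_trans; [exact IH | now apply t_step].
Qed.

Lemma le_node_from_trans t x :
  le_node N (inr t) (inl x) -> exists p, 0 < post N t p /\ le_node N (inl p) (inl x).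
Proof.
  intros H. apply clos_rt_rt1n in H. inversion H as [|[p | t'] b Hf Hr]; subst.
  - exists p. split; [exact Hf | now apply clos_rt1n_rt].
  - unfold flowR in Hf; simpl in Hf; lia.
Qed.

Lemma le_node_from_place z x :
  le_node N (inl z) (inl x) -> z <> x -> exists t, 0 < pre N z t /\ le_node N (inr t) (inl x).
Proof.
  intros H Hne. apply clos_rt_rt1n in H. inversion H as [|[p | t] b Hf Hr]; subst; [congruence| |].
  - unfold flowR in Hf; simpl in Hf; lia.
  - exists t. split; [exact Hf | now apply clos_rt1n_rt].
Qed.

Lemma le_node_to_trans t' t :
  le_node N (inr t') (inr t) -> t' = t \/ exists p, 0 < pre N p t /\ le_node N (inr t') (inl p).
Proof.
  intros H. apply clos_rt_rtn1 in H. inversion H as [|[p | t''] b Hf Hr]; subst; [now left| |].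
  - right. exists p. split; [exact Hf | now apply clos_rtn1_rt].
  - unfold flowR in Hf; simpl in Hf; lia.
Qed.

Lemma le_node_to_place t' p :
  le_node N (inr t') (inl p) -> exists t, 0 < post N t p /\ le_node N (inr t') (inr t).
Proof.
  intros H. apply clos_rt_rtn1 in H. inversion H as [|[p' | t] b Hf Hr]; subst.
  - unfold flowR in Hf; simpl in Hf; lia.
  - exists t. split; [exact Hf | now apply clos_rtn1_rt].
Qed.

Lemma concurrent_sym x y : concurrent N x y -> concurrent N y x.
Proof.
  intros [Hcaus Hconf]. split.
  - intros [H | H]; apply Hcaus; [right | left]; exact H.
  - intros [p [t1 [t2 [? [? [? [? [? [? ?]]]]]]]]]. apply Hconf.
    exists p, t2, t1. repeat split; auto.
Qed.

End Causality.

Section OccurrenceNet.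

Variable NU : PNet.
Hypothesis Hwf : well_founded (flowR NU).
Hypothesis Hno_self_conflict : forall t, ~ conflict NU (inr t) (inr t).

Lemma finite_past :
  petri_net NU -> (forall p t1 t2, 0 < post NU t1 p -> 0 < post NU t2 p -> t1 = t2) ->
  forall x, finite_set (fun t => le_node NU (inr t) x).
Proof.
  intros [_ [Hpre _]] Huniq x. induction x as [x IH] using (well_founded_ind Hwf).
  destruct x as [p | t].
  - destruct (classic (exists t, 0 < post NU t p)) as [[t0 Ht0] | Hnone].
    + apply (finite_set_incl _ _ (IH (inr t0) Ht0)).
      intros t' Ht'. destruct (le_node_to_place _ _ _ Ht') as [t [Ht Hle]].
      now rewrite (Huniq _ _ _ Ht Ht0) in Hle.
    + exists []. intros t' Ht'. destruct (le_node_to_place _ _ _ Ht') as [t [Ht _]].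
      exfalso; eauto.
  - destruct (Hpre t) as [[lpre Hlpre] _].
    destruct (finite_set_list_union lpre
                (fun p t' => 0 < pre NU p t /\ le_node NU (inr t') (inl p))) as [l Hl].
    { intros p _. destruct (Nat.lt_ge_cases 0 (pre NU p t)) as [Hp | Hp].
      - apply (finite_set_incl _ _ (IH (inl p) Hp)). now intros t' [_ H].
      - exists []. intros t' [H _]; lia. }
    exists (t :: l). intros t' Ht'. destruct (le_node_to_trans _ _ _ Ht') as [-> | [p [Hp Hle]]].
    + now left.
    + right. apply Hl. eauto.
Qed.

Lemma preset_not_le t z1 z2 :
  0 < pre NU z1 t -> 0 < pre NU z2 t -> z1 <> z2 -> ~ le_node NU (inl z1) (inl z2).
Proof.
  intros Hz1 Hz2 Hne Hle. destruct (le_node_from_place _ _ _ Hle Hne) as [t1 [Ht1 Hle1]].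
  destruct (classic (t1 = t)) as [-> | Hne1].
  - apply (lt_node_irrefl _ Hwf (inr t)). now apply le_node_flow_lt with (inl z2).
  - apply (Hno_self_conflict t). exists z1, t1, t. repeat split; try discriminate; auto.
    + eapply rt_trans; [exact Hle1 | now apply rt_step].
    + apply rt_refl.
Qed.

Lemma preset_concurrent t z1 z2 :
  0 < pre NU z1 t -> 0 < pre NU z2 t -> z1 <> z2 -> concurrent NU (inl z1) (inl z2).
Proof.
  intros Hz1 Hz2 Hne. split.
  - intros [H | H]; [exact (preset_not_le t z1 z2 Hz1 Hz2 Hne H)|].
    exact (preset_not_le t z2 z1 Hz2 Hz1 (not_eq_sym Hne) H).
  - intros [p [ta [tb [? [? [? [? [? [Hta Htb]]]]]]]]].
    apply (Hno_self_conflict t). exists p, ta, tb. repeat split; try discriminate; auto.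
    + eapply rt_trans; [exact Hta | now apply rt_step].
    + eapply rt_trans; [exact Htb | now apply rt_step].
Qed.

Definition past (X : list (place NU)) t := exists x, In x X /\ le_node NU (inr t) (inl x).

Definition maximal_in_past (X : list (place NU)) t :=
  past X t /\ forall x, In x X -> le_node NU (inr t) (inl x) -> 0 < post NU t x.

(* Undo the firing of t: remove its postset from X and add its preset [pre_t]. *)
Definition unfire (X : list (place NU)) t (pre_t : list (place NU)) :=
  filter (fun x => negb (0 <? post NU t x)) X ++ filter (fun p => 0 <? pre NU p t) pre_t.

Lemma in_unfire X t pre_t y :
  In y (unfire X t pre_t) <-> (In y X /\ post NU t y = 0) \/ (In y pre_t /\ 0 < pre NU y t).
Proof.
  unfold unfire. rewrite in_app_iff, !filter_In, Bool.negb_true_iff, Nat.ltb_lt, Nat.ltb_ge.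
  split; intros [[? ?] | [? ?]]; [left | right | left | right]; split; auto; lia.
Qed.

Section Maximal.

Variables (X : list (place NU)) (t : trans NU).
Hypothesis HX : pairwise_concurrent NU (fun x => In x X).
Hypothesis Ht : maximal_in_past X t.

Lemma preset_concurrent_untouched z x :
  0 < pre NU z t -> In x X -> post NU t x = 0 -> z <> x -> concurrent NU (inl z) (inl x).
Proof.
  (* Through a condition x0 of X produced by t, any causality or conflict between z and x
     would transfer to x0 and x. *)
  intros Hz Hx Hpx Hne. destruct Ht as [[x0 [Hx0 Hle0]] Hmax].
  pose proof (Hmax x0 Hx0 Hle0) as Hp0.
  assert (Hzx0 : le_node NU (inl z) (inl x0))
    by (apply rt_trans with (inr t); now apply rt_step).
  assert (Hx0x : x0 <> x) by (intros ->; lia).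
  destruct (HX x0 x Hx0 Hx Hx0x) as [Hcaus Hconf].
  split.
  - intros [Hle | Hle].
    + destruct (le_node_from_place _ _ _ Hle Hne) as [t1 [Ht1 Hle1]].
      destruct (classic (t1 = t)) as [-> | Hne1]; [pose proof (Hmax x Hx Hle1); lia|].
      apply Hconf. exists z, t, t1. repeat split; auto; try (now apply rt_step).
      * intros [= ->]. apply (lt_node_irrefl _ Hwf (inl x0)).
        apply flow_le_node_lt with (inr t); [exact Hz | now apply rt_step].
      * congruence.
    + apply Hcaus. right. now apply rt_trans with (inl z).
  - intros [p [ta [tb [? [? [? [Hpa [? [Hta ?]]]]]]]]].
    apply Hconf. exists p, ta, tb. repeat split; auto.
    + intros [= ->]. apply (lt_node_irrefl _ Hwf (inl x0)).
      apply flow_le_node_lt with (inr ta); [exact Hpa | now apply rt_trans with (inl z)].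
    + now apply rt_trans with (inl z).
Qed.

Lemma unfire_pairwise_concurrent pre_t :
  pairwise_concurrent NU (fun y => In y (unfire X t pre_t)).
Proof.
  intros y1 y2 H1 H2 Hne.
  apply in_unfire in H1 as [[? ?] | [_ ?]]; apply in_unfire in H2 as [[? ?] | [_ ?]].
  - auto.
  - apply concurrent_sym. now apply preset_concurrent_untouched.
  - now apply preset_concurrent_untouched.
  - now apply preset_concurrent with t.
Qed.

Lemma past_unfire pre_t t' : past (unfire X t pre_t) t' -> past X t' /\ t' <> t.
Proof.
  intros [y [Hy Hle]]. destruct Ht as [[x0 [Hx0 Hle0]] Hmax].
  pose proof (Hmax x0 Hx0 Hle0) as Hp0.
  apply in_unfire in Hy as [[HyX Hpy] | [_ Hpre]].
  - split; [now exists y|]. intros ->. pose proof (Hmax y HyX Hle). lia.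
  - split.
    + exists x0. split; auto. apply rt_trans with (inl y); auto.
      apply rt_trans with (inr t); now apply rt_step.
    + intros ->. apply (lt_node_irrefl _ Hwf (inr t)). now apply le_node_flow_lt with (inl y).
Qed.

End Maximal.

Lemma exists_maximal_in_past X l :
  (forall t, past X t -> In t l) -> (exists t, past X t) -> exists t, In t l /\ maximal_in_past X t.
Proof.
  intros Hl [t0 Ht0].
  destruct (exists_maximal_in_list (fun a b => lt_node NU (inr a) (inr b)) (past X)
              (fun a b c => t_trans _ _ _ _ _) (fun a => lt_node_irrefl _ Hwf (inr a)) l)
    as [m [Hm [Pm Hmax]]]; [eauto|].
  exists m. repeat split; auto. intros x Hx Hle.
  destruct (le_node_from_trans _ _ _ Hle) as [p [Hp Hpx]].
  destruct (classic (p = x)) as [<- | Hne]; auto.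
  destruct (le_node_from_place _ _ _ Hpx Hne) as [t1 [Ht1 Hle1]].
  exfalso. apply (Hmax t1); [apply Hl | |]; try now exists x.
  apply flow_le_node_lt with (inl p); [exact Hp | now apply rt_step].
Qed.

End OccurrenceNet.

Section BranchingProcess.

Variables (N NU : PNet) (lp : place NU -> place N) (lt : trans NU -> trans N).

(* lambda[X] <= M, phrased without decidable equality on the places of N. *)
Definition covered (M : place N -> nat) (X : list (place NU)) :=
  forall q Y, NoDup Y -> (forall y, In y Y -> In y X /\ lp y = q) -> length Y <= M q.

Hypothesis HpnU : petri_net NU.
Hypothesis Hpre_set : forall p t, pre NU p t <= 1.
Hypothesis Hunique_producer : forall p t1 t2, 0 < post NU t1 p -> 0 < post NU t2 p -> t1 = t2.
Hypothesis Hinit_set : forall p, init NU p <= 1 /\ (init NU p = 1 <-> forall t, post NU t p = 0).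
Hypothesis Hwf : well_founded (flowR NU).
Hypothesis Hno_self_conflict : forall t, ~ conflict NU (inr t) (inr t).
Hypothesis Hhom : homomorphism NU N lp lt.
Hypothesis Hinit : mset_image lp (init NU) (init N).

Lemma covered_unfire_fire X t pre_t M :
  (forall p, 0 < pre NU p t -> In p pre_t) ->
  pairwise_concurrent NU (fun x => In x X) -> maximal_in_past NU X t ->
  covered M (unfire NU X t pre_t) -> enabled N (lt t) M /\ covered (fire N (lt t) M) X.
Proof.
  intros Hpre_t HX Ht Hcov.
  assert (Hpreimage : forall q, exists Z, NoDup Z /\ length Z = pre N q (lt t) /\
                        forall z, In z Z -> lp z = q /\ 0 < pre NU z t)
    by (intros q; apply mset_sum_on_set_support; [apply (proj1 (Hhom t) q) | auto]).
  split.
  - intros q. destruct (Hpreimage q) as [Z [HZ [<- HZq]]].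
    apply Hcov; auto. intros z Hz. destruct (HZq z Hz). split; auto.
    apply in_unfire. auto.
  - intros q Y HY HYX. unfold fire. destruct (Hpreimage q) as [Z [HZ [HZlen HZq]]].
    rewrite (length_filter_split (fun y => 0 <? post NU t y) Y).
    assert (Hproduced : length (filter (fun y => 0 <? post NU t y) Y) <= post N (lt t) q).
    { apply (mset_sum_on_ge_length _ _ _ _ (proj2 (Hhom t) q)); [now apply NoDup_filter|].
      intros y Hy. apply filter_In in Hy as [Hy Hpy]. split; [apply HYX; auto|now apply Nat.ltb_lt]. }
    assert (Hkept : length (filter (fun y => negb (0 <? post NU t y)) Y ++ Z) <= M q).
    { apply Hcov.
      - apply NoDup_app; [now apply NoDup_filter | auto|].
        intros y Hy Hz. apply filter_In in Hy as [Hy Hpost].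
        rewrite Bool.negb_true_iff, Nat.ltb_ge in Hpost.
        destruct (HZq y Hz) as [_ Hpre]. destruct (HYX y Hy) as [HyX _].
        destruct Ht as [[x0 [Hx0 Hle0]] Hmax]. pose proof (Hmax x0 Hx0 Hle0).
        assert (Hne : y <> x0) by (intros ->; lia).
        apply (proj1 (HX y x0 HyX Hx0 Hne)). left.
        apply rt_trans with (inr t); now apply rt_step.
      - intros y Hy. apply in_app_or in Hy as [Hy | Hy].
        + apply filter_In in Hy as [Hy Hpy]. destruct (HYX y Hy).
          rewrite Bool.negb_true_iff, Nat.ltb_ge in Hpy. split; auto. apply in_unfire. left; split; auto; lia.
        + destruct (HZq y Hy). split; auto. apply in_unfire. auto. }
    rewrite length_app in Hkept. lia.
Qed.

Lemma covered_init X : ~ (exists t, past NU X t) -> covered (init N) X.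
Proof.
  intros Hnopast q Y HY HYX. apply (mset_sum_on_ge_length _ _ _ _ (Hinit q) HY).
  intros y Hy. destruct (HYX y Hy) as [HyX Hyq]. split; auto.
  enough (init NU y = 1) by lia.
  apply Hinit_set. intros t. destruct (Nat.eq_0_gt_0_cases (post NU t y)) as [| Hpost]; auto.
  exfalso. apply Hnopast. exists t, y. split; auto. now apply rt_step.
Qed.

Lemma covered_reachable_of_finite_past X l :
  (forall t, past NU X t -> In t l) -> pairwise_concurrent NU (fun x => In x X) ->
  exists M, reachable N M /\ covered M X.
Proof.
  remember (length l) as n eqn:Hn. revert X l Hn.
  induction n as [n IH] using lt_wf_ind; intros X l -> Hl HX.
  destruct (classic (exists t, past NU X t)) as [Hpast | Hnopast];
    [| exists (init N); split; [constructor | now apply covered_init]].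
  destruct (exists_maximal_in_past NU Hwf X l Hl Hpast) as [t [Htl Ht]].
  destruct HpnU as [_ [Hpre _]]. destruct (Hpre t) as [[pre_t Hpre_t] _].
  pose (l' := remove (fun a b : trans NU => excluded_middle_informative (a = b)) t l).
  destruct (IH (length l') (remove_length_lt _ l t Htl) (unfire NU X t pre_t) l' eq_refl)
    as [M [HM Hcov]].
  - intros t' Ht'. destruct (past_unfire NU Hwf X t Ht pre_t t' Ht'). unfold l'.
    apply in_in_remove; auto.
  - now apply unfire_pairwise_concurrent.
  - destruct (covered_unfire_fire X t pre_t M Hpre_t HX Ht Hcov) as [Henabled Hcov'].
    exists (fire N (lt t) M). split; auto. now constructor.
Qed.

Lemma covered_reachable X :
  pairwise_concurrent NU (fun x => In x X) -> exists M, reachable N M /\ covered M X.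
Proof.
  destruct (finite_set_list_union X (fun x t => le_node NU (inr t) (inl x))) as [l Hl].
  - intros x _. now apply finite_past.
  - now apply covered_reachable_of_finite_past with l.
Qed.

End BranchingProcess.

Theorem mainTheorem13 (N : PNet) (k : nat)
  (HN : petri_net N) (Hfin : finite_net N) (Hk : 1 <= k) (Hbd : k_bounded k N)
  (NU : PNet) (lp : place NU -> place N) (lt : trans NU -> trans N)
  (Hbp : initial_branching_process N NU lp lt)
  (C : place NU -> Prop) (HC : cut NU C) :
  finite_set C.
Proof.
  destruct Hbp as [HpnU [Hocc [[Hhom Hinit] _]]].
  destruct Hocc as [Hpre_set [_ [Hunique_producer [Hinit_set [Hwf Hno_self_conflict]]]]].
  destruct HC as [HC _].
  assert (Hfibre : forall s, finite_set (fun p => C p /\ lp p = s)).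
  { intros s. apply (finite_set_of_bounded_NoDup _ k). intros L HL HLs.
    destruct (covered_reachable N NU lp lt HpnU Hpre_set Hunique_producer Hinit_set Hwf
                Hno_self_conflict Hhom Hinit L) as [M [HM Hcov]].
    - intros x y Hx Hy. apply HC; apply HLs; auto.
    - transitivity (M s); [apply (Hcov s L HL) | now apply Hbd].
      intros y Hy. split; auto. apply HLs; auto. }
  destruct Hfin as [[places Hplaces] _].
  apply (finite_set_incl _ _ (finite_set_list_union places _ (fun s _ => Hfibre s))).
  intros p Hp. exists (lp p). auto.
Qed.
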